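(* A graph $G$ (without isolated vertices) is $2$-$\gamma_{\rm tg}$-critical if and only if $G$ is a complete graph $K_n$ with $n \ge 2$.
   Context: Total domination game on a graph without isolated vertices: Dominator and Staller alternately choose vertices, each chosen vertex must be adjacent to some vertex not yet totally dominated; the game ends when no legal move exists; Dominator minimizes, Staller maximizes the number of moves; $\gamma_{\rm tg}(G)$ is the number of moves in the Dominator-start game under optimal play. $G|v$ is $G$ with $v$ declared already totally dominated, with $\gamma_{\rm tg}(G|v)$ defined analogously. $G$ is $\gamma_{\rm tg}$-critical if $\gamma_{\rm tg}(G|v)<\gamma_{\rm tg}(G)$ for every vertex $v$, and $k$-$\gamma_{\rm tg}$-critical if moreover $\gamma_{\rm tg}(G)=k$. *)

From mathcomp Require Import all_boot.
Set Implicit Arguments. Unset Strict Implicit. Unset Printing Implicit Defensive.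

Section TotalDominationGame.
Variables (T : finType) (e : rel T).

Definition nbhd (x : T) : {set T} := [set y | e x y].

(* S = set of vertices already totally dominated (by chosen vertices, or declared).
   A vertex x is a legal move iff it is adjacent to some vertex not yet totally dominated. *)
Definition legal (S : {set T}) (x : T) : bool := [exists y, e x y && (y \notin S)].

Definition after (S : {set T}) (x : T) : {set T} := S :|: nbhd x.

(* Number of remaining moves under optimal play, from position S,
   with Dominator (minimizer) to move iff [dom] is true.  [n] is fuel;
   every legal move strictly enlarges S, so fuel #|T| is sufficient.
   When Dominator has a legal move, the minimum over legal moves is taken
   with neutral element n.+1, which is never smaller than any option
   (all values computed with fuel n are <= n). *)
Fixpoint game_val (n : nat) (dom : bool) (S : {set T}) : nat :=
  match n with
  | 0 => 0
  | n'.+1 =>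
    if [exists x, legal S x] then
      if dom then \big[minn/n'.+1]_(x | legal S x) (game_val n' false (after S x)).+1
      else \max_(x | legal S x) (game_val n' true (after S x)).+1
    else 0
  end.

Definition gamma_tg : nat := game_val #|T| true set0.

Definition gamma_tg_v (v : T) : nat := game_val #|T| true [set v].

Definition gamma_tg_critical : Prop := forall v : T, gamma_tg_v v < gamma_tg.

Definition k_gamma_tg_critical (k : nat) : Prop := gamma_tg_critical /\ gamma_tg = k.

Definition simple_graph : Prop := symmetric e /\ irreflexive e.
Definition no_isolated : Prop := forall x : T, exists y, e x y.

Definition complete_graph : Prop := forall x y : T, x != y -> e x y.

End TotalDominationGame.

From HB Require Import structures.
From mathcomp Require Import all_boot.
Set Implicit Arguments. Unset Strict Implicit. Unset Printing Implicit Defensive.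

(* A move x totally dominates N(x) but never x itself.  Hence from scratch the
   game lasts at least two moves, and G|v is finished by one Dominator move
   only if that move is v and N(v) contains every other vertex.  So if
   gamma_tg(G) = 2 and G is critical, every vertex is universal and G is
   complete.  Conversely, in K_n Dominator finishes K_n|v by playing v, and in
   K_n any first move x leaves only x undominated, which every legal reply of
   Staller dominates. *)

(* [minn] has no neutral element in nat, hence only a semigroup law; this is
   enough for [bigD1] on Dominator's minimum, whose idx is arbitrary fuel. *)
HB.instance Definition _ := SemiGroup.isComLaw.Build nat minn minnA minnC.

Lemma bigminn_le (I : finType) (P : pred I) (F : I -> nat) k j :
  P j -> \big[minn/k]_(i | P i) F i <= F j.
Proof. by move=> Pj; rewrite (bigD1 j) //= geq_minl. Qed.

Lemma bigminn_geq (I : finType) (P : pred I) (F : I -> nat) k m :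
  m <= k -> (forall i, P i -> m <= F i) -> m <= \big[minn/k]_(i | P i) F i.
Proof.
move=> m_le_k m_le_F; apply: (big_ind (leq m)) => // a b m_le_a m_le_b.
by rewrite leq_min m_le_a.
Qed.

Section GameValue.
Variables (T : finType) (e : rel T).
Implicit Types (S : {set T}) (x : T).

Lemma game_val_le_fuel n b S : game_val e n b S <= n.
Proof.
elim: n b S => [|n IH] b S //=.
case: ifP => // _; case: b.
- apply: (big_ind (leq^~ n.+1)) => // [a c a_le _ | x _].
  + by rewrite geq_min a_le.
  + by rewrite ltnS IH.
- by apply/bigmax_leqP => x _; rewrite ltnS IH.
Qed.

Lemma game_val_setT n b : game_val e n b setT = 0.
Proof.
case: n => //= n; rewrite ifF //; apply/negbTE/existsPn => x.
by apply/existsPn => y; rewrite in_setT andbF.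
Qed.

Lemma game_val_dom_le n S x :
  legal e S x -> game_val e n.+1 true S <= (game_val e n false (after e S x)).+1.
Proof.
move=> legal_x /=; rewrite ifT; last by apply/existsP; exists x.
exact: bigminn_le.
Qed.

Lemma game_val_dom_ge n S m :
  [exists x, legal e S x] -> m <= n.+1 ->
  (forall x, legal e S x -> m <= (game_val e n false (after e S x)).+1) ->
  m <= game_val e n.+1 true S.
Proof. by move=> some_legal m_le m_le_opt /=; rewrite some_legal; exact: bigminn_geq. Qed.

Lemma game_val_stall_le n S m :
  (forall x, legal e S x -> game_val e n true (after e S x) < m) ->
  game_val e n.+1 false S <= m.
Proof. by move=> opt_lt /=; case: ifP => // _; apply/bigmax_leqP. Qed.

Hypotheses (e_sym : symmetric e) (e_no_isolated : no_isolated e).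

Lemma exists_legalE S : [exists x, legal e S x] = (S != setT).
Proof.
rewrite -subTset; apply/existsP/subsetPn => [[x /existsP [y /andP [_ yS]]] | [y _ yS]].
- by exists y; rewrite ?in_setT.
- have [x e_yx] := e_no_isolated y.
  by exists x; apply/existsP; exists y; rewrite e_sym e_yx.
Qed.

Lemma game_val_eq0 n b S : (game_val e n.+1 b S == 0) = (S == setT).
Proof.
have [->|S_ne] := eqVneq S setT; first by rewrite game_val_setT.
have /existsP [x legal_x] : [exists x, legal e S x] by rewrite exists_legalE.
rewrite /= ifT; last by apply/existsP; exists x.
apply/negbTE; rewrite -lt0n; case: b.
- by apply: bigminn_geq.
- exact: leq_trans (ltn0Sn _) (leq_bigmax_cond _ legal_x).
Qed.

Lemma game_val_le1_finish n S :
  S != setT -> game_val e n.+2 true S <= 1 -> exists x, after e S x = setT.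
Proof.
move=> S_ne val_le1.
have [/existsP [x /eqP finish] | /existsPn no_finish] :=
  boolP [exists x, after e S x == setT]; first by exists x.
have two_le : 2 <= game_val e n.+2 true S.
  apply: game_val_dom_ge => // [|x _]; first by rewrite exists_legalE.
  by rewrite ltnS lt0n game_val_eq0 no_finish.
by have := leq_trans two_le val_le1.
Qed.

Hypothesis e_irr : irreflexive e.

Lemma notin_nbhd x : x \notin nbhd e x.
Proof. by rewrite inE e_irr. Qed.

Lemma mem_of_after_setT S x : after e S x = setT -> x \in S.
Proof.
by move=> finish; have := in_setT x; rewrite -finish in_setU (negbTE (notin_nbhd x)) orbF.
Qed.

Lemma two_le_game_val_set0 n : 0 < #|T| -> 2 <= game_val e n.+2 true set0.
Proof.
move=> /card_gt0P [x _]; apply: game_val_dom_ge => // [|z _].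
- by rewrite exists_legalE -subTset; apply/subsetPn; exists x; rewrite ?inE.
- rewrite ltnS lt0n game_val_eq0.
  by apply/eqP => /mem_of_after_setT; rewrite inE.
Qed.

Lemma adjacent_of_game_val_set1_le1 n v y :
  v != y -> game_val e n.+2 true [set v] <= 1 -> e v y.
Proof.
move=> vy val_le1.
have v_ne : [set v] != setT.
  by rewrite -subTset; apply/subsetPn; exists y; rewrite ?inE // eq_sym.
have [x finish] := game_val_le1_finish v_ne val_le1.
have := mem_of_after_setT finish; rewrite inE => /eqP xv.
by have := in_setT y; rewrite -finish xv /after !inE eq_sym (negbTE vy).
Qed.

Hypothesis e_complete : complete_graph e.

Lemma nbhd_complete x : nbhd e x = [set~ x].
Proof.
apply/setP => y; rewrite !inE.
by have [->|yx] := eqVneq y x; [rewrite e_irr | rewrite e_complete // eq_sym].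
Qed.

Lemma game_val_set1_complete n v : game_val e n.+1 true [set v] <= 1.
Proof.
have [y e_vy] := e_no_isolated v.
have legal_v : legal e [set v] v.
  apply/existsP; exists y; rewrite e_vy inE /=.
  by apply: contraTneq e_vy => ->; rewrite e_irr.
have finish : after e [set v] v = setT.
  by apply/setP => w; rewrite /after nbhd_complete !inE orbN.
by apply: leq_trans (game_val_dom_le _ legal_v) _; rewrite finish game_val_setT.
Qed.

Lemma game_val_set0_complete n : 0 < #|T| -> game_val e n.+2 true set0 <= 2.
Proof.
move=> /card_gt0P [x _]; have [y e_xy] := e_no_isolated x.
have legal_x : legal e set0 x by apply/existsP; exists y; rewrite e_xy inE.
apply: leq_trans (game_val_dom_le _ legal_x) _; rewrite ltnS.
apply: game_val_stall_le => z /existsP [w /andP [e_zw]].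
rewrite /after nbhd_complete !inE negbK => /eqP wx.
have zx : z != x by apply: contraTneq e_zw => ->; rewrite wx e_irr.
suff -> : set0 :|: [set~ x] :|: nbhd e z = setT by rewrite game_val_setT.
apply/setP => u; rewrite nbhd_complete !inE.
by have [->|] := eqVneq u x; rewrite ?orbT // eq_sym zx.
Qed.

End GameValue.

Theorem proposition4p1 (T : finType) (e : rel T) :
  simple_graph e -> no_isolated e ->
  (k_gamma_tg_critical e 2 <-> (complete_graph e /\ 2 <= #|T|)).
Proof.
move=> [e_sym e_irr] e_no_isolated.
rewrite /k_gamma_tg_critical /gamma_tg_critical /gamma_tg /gamma_tg_v.
split=> [[critical val2] | [e_complete card2]].
- have card2 : 2 <= #|T| by rewrite -val2 game_val_le_fuel.
  have [n cardT] : exists n, #|T| = n.+2 by exists #|T|.-2; case: #|T| card2 => [|[]].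
  split=> // v y vy; have := critical v; rewrite val2 cardT ltnS.
  exact: adjacent_of_game_val_set1_le1.
- have card0 : 0 < #|T| by apply: leq_trans card2.
  have [n cardT] : exists n, #|T| = n.+2 by exists #|T|.-2; case: #|T| card2 => [|[]].
  have val2 : game_val e n.+2 true set0 = 2.
    by apply/eqP; rewrite eqn_leq game_val_set0_complete ?two_le_game_val_set0.
  rewrite cardT val2; split=> // v; rewrite ltnS.
  exact: game_val_set1_complete.
Qed.
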